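(* Let $a,b,c,k,m>0$ and consider the system $$\frac{dx}{dt}=bx(1-x-cy),\qquad \frac{dy}{dt}=y\Big(\frac{1}{1+kx}-y-ax-mxy\Big).$$ Let $k^*=\frac{1}{a}-1$. If $0<k<k^*$ and $0<c<1$, then the system is permanent: there exist constants $0<\mu\le M$, independent of the solution, such that every solution with $x(0)>0$, $y(0)>0$ satisfies $$\mu\le\liminf_{t\to+\infty}x(t)\le\limsup_{t\to+\infty}x(t)\le M,\qquad \mu\le\liminf_{t\to+\infty}y(t)\le\limsup_{t\to+\infty}y(t)\le M.$$
   Context: All parameters $a,b,c,k,m$ are positive constants. *)

From Stdlib Require Import Reals.
From Coquelicot Require Import Coquelicot.
Open Scope R_scope.

(* mu <= liminf_{t -> +oo} f t  (liminf taken in the extended reals),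
   written out: for every eps > 0, eventually f t >= mu - eps. *)
Definition liminf_ge (f : R -> R) (mu : R) : Prop :=
  forall eps : R, 0 < eps -> exists T : R, forall t : R, T <= t -> mu - eps <= f t.

Definition limsup_le (f : R -> R) (M : R) : Prop :=
  forall eps : R, 0 < eps -> exists T : R, forall t : R, T <= t -> f t <= M + eps.

Definition is_solution (a b c k m : R) (x y : R -> R) : Prop :=
  filterlim x (at_right 0) (locally (x 0)) /\
  filterlim y (at_right 0) (locally (y 0)) /\
  (forall t : R, 0 < t ->
     is_derive x t (b * x t * (1 - x t - c * y t)) /\
     is_derive y t (y t * (1 / (1 + k * x t) - y t - a * x t - m * x t * y t))).

From Stdlib Require Import Reals Lra Psatz Classical.
From Coquelicot Require Import Coquelicot.
Open Scope R_scope.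

(* Each per-capita growth rate is continuous along a solution, so
   x t = x s * exp (int_s^t rate) and both components stay positive.  For a
   positive f with f' = f g, a level is eventually crossed for good once g
   (the derivative of ln f) is bounded away from 0 on the wrong side of it.
   The rates of x and y are at most 1 - x and 1 - y, so both components end
   up below 1 + eps.  Feeding this back, the rate of x is at least
   b eps (1 - c) while x < 1 - c - eps, and the rate of y is at least
   eps (1 + m) / 2 while y < (1/(1+k) - a)/(1+m) - eps; that floor is
   positive exactly when k < 1/a - 1. *)

Lemma deriv_neg_left_gt (f : R -> R) (t l s : R) :
  is_derive f t l -> l < 0 -> s < t -> exists r, s <= r < t /\ f t < f r.
Proof.
  intros Hf Hl Hst. apply is_derive_Reals in Hf.
  destruct (Hf (- l / 2) ltac:(lra)) as [[d Hd] Hquot].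
  set (h := - Rmin (d / 2) (t - s)).
  assert (Hh : 0 < - h) by (unfold h; rewrite Ropp_involutive; apply Rmin_pos; lra).
  assert (Hhd : - h <= d / 2) by (unfold h; rewrite Ropp_involutive; apply Rmin_l).
  assert (Hhs : - h <= t - s) by (unfold h; rewrite Ropp_involutive; apply Rmin_r).
  specialize (Hquot h ltac:(lra) ltac:(simpl; rewrite Rabs_left; lra)).
  exists (t + h). split; [lra|].
  set (q := (f (t + h) - f t) / h) in Hquot.
  assert (Hq : f (t + h) - f t = q * h) by (unfold q; field; lra).
  apply Rabs_def2 in Hquot. nra.
Qed.

Lemma stays_le_of_deriv_neg (h dh : R -> R) (T L : R) :
  (forall t, T < t -> is_derive h t (dh t)) ->
  (forall t, T < t -> L < h t -> dh t < 0) ->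
  forall s t, T < s -> s <= t -> h s <= L -> h t <= L.
Proof.
  intros Hd Hneg s t Hs Hst Hhs.
  destruct (Rle_or_lt (h t) L) as [Hle | Hgt]; [exact Hle | exfalso].
  destruct (continuity_ab_maj h s t Hst) as [r [Hmax Hr]].
  { intros u Hu. apply continuity_pt_filterlim, (ex_derive_continuous h).
    exists (dh u). apply Hd. lra. }
  assert (Hhr : L < h r) by (specialize (Hmax t ltac:(lra)); lra).
  assert (Hsr : s < r) by (destruct (Req_dec r s) as [-> | Hne]; lra).
  destruct (deriv_neg_left_gt h r (dh r) s (Hd r ltac:(lra)) (Hneg r ltac:(lra) Hhr) Hsr)
    as [u [Hu Hhu]].
  specialize (Hmax u ltac:(lra)). lra.
Qed.

Lemma eventually_le_of_deriv_le (h dh : R -> R) (T L d : R) : 0 < d ->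
  (forall t, T < t -> is_derive h t (dh t)) ->
  (forall t, T < t -> L < h t -> dh t <= - d) ->
  exists T', forall t, T' <= t -> h t <= L.
Proof.
  intros Hd0 Hd Hrate.
  assert (Hneg : forall t, T < t -> L < h t -> dh t < 0).
  { intros t Ht Hh. specialize (Hrate t Ht Hh). lra. }
  destruct (classic (exists s, T < s /\ h s <= L)) as [[s [Hs Hhs]] | Hnone].
  { exists s. intros t Ht. exact (stays_le_of_deriv_neg h dh T L Hd Hneg s t Hs Ht Hhs). }
  exfalso.
  assert (Habove : forall t, T < t -> L < h t).
  { intros t Ht. apply Rnot_le_lt. intros Hle. apply Hnone. exists t. auto. }
  set (s := T + 1).
  set (t := s + (h s - L) / d + 1).
  assert (Hwait : 0 <= (h s - L) / d).
  { apply Rdiv_le_0_compat; [|lra]. specialize (Habove s ltac:(unfold s; lra)). lra. }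
  destruct (MVT_gen h s t dh) as [r [Hr Hmvt]].
  - intros u Hu. rewrite Rmin_left, Rmax_right in Hu by (unfold t; lra).
    apply Hd. unfold s in Hu. lra.
  - intros u Hu. rewrite Rmin_left, Rmax_right in Hu by (unfold t; lra).
    apply continuity_pt_filterlim, (ex_derive_continuous h).
    exists (dh u). apply Hd. unfold s in Hu. lra.
  - rewrite Rmin_left, Rmax_right in Hr by (unfold t; lra).
    assert (Hdr : dh r <= - d) by (apply Hrate; unfold s in Hr; [lra | apply Habove; lra]).
    assert (Hht : L < h t) by (apply Habove; unfold t, s in *; lra).
    assert (Hdiv : (h s - L) / d * d = h s - L) by (field; lra).
    unfold t in Hmvt, Hht. nra.
Qed.

Lemma eventually_ge_of_deriv_ge (h dh : R -> R) (T L d : R) : 0 < d ->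
  (forall t, T < t -> is_derive h t (dh t)) ->
  (forall t, T < t -> h t < L -> d <= dh t) ->
  exists T', forall t, T' <= t -> L <= h t.
Proof.
  intros Hd0 Hd Hrate.
  destruct (eventually_le_of_deriv_le (fun t => - h t) (fun t => - dh t) T (- L) d Hd0)
    as [T' HT'].
  - intros t Ht. apply (is_derive_opp h). auto.
  - intros t Ht Hh. specialize (Hrate t Ht ltac:(lra)). lra.
  - exists T'. intros t Ht. specialize (HT' t Ht). lra.
Qed.

Lemma is_derive_RInt_pos (g : R -> R) (s t : R) : 0 < s -> 0 < t ->
  (forall u, 0 < u -> continuous g u) ->
  is_derive (fun r => RInt g s r) t (g t).
Proof.
  intros Hs Ht Hg. apply (is_derive_RInt g (fun r => RInt g s r) s t); [| apply Hg; exact Ht].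
  exists (mkposreal (t / 2) ltac:(lra)). intros u Hu.
  apply Rabs_lt_between' in Hu. simpl in Hu.
  apply (RInt_correct (V := R_CompleteNormedModule)), ex_RInt_continuous.
  intros z Hz. apply Hg.
  assert (0 < Rmin s u) by (apply Rmin_pos; lra). lra.
Qed.

Lemma growth_exp_RInt (f g : R -> R) (s t : R) : 0 < s -> 0 < t ->
  (forall u, 0 < u -> is_derive f u (f u * g u)) ->
  (forall u, 0 < u -> continuous g u) ->
  f t = f s * exp (RInt g s t).
Proof.
  intros Hs Ht Hf Hg.
  set (v := fun r => f r * exp (- RInt g s r)).
  assert (Hv : forall r, 0 < r -> is_derive v r 0).
  { intros r Hr. unfold v.
    replace 0 with (f r * g r * exp (- RInt g s r) + f r * (- g r * exp (- RInt g s r)))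
      by ring.
    apply (Derive.is_derive_mult f (fun r => exp (- RInt g s r))); [apply Hf, Hr |].
    apply (is_derive_comp exp (fun r => - RInt g s r)); [apply is_derive_exp |].
    apply (is_derive_opp (fun r => RInt g s r)), is_derive_RInt_pos; assumption. }
  destruct (MVT_gen v s t (fun _ => 0)) as [r [Hr Hmvt]].
  - intros u Hu. apply Hv. assert (0 < Rmin s t) by (apply Rmin_pos; lra). lra.
  - intros u Hu. apply continuity_pt_filterlim, (ex_derive_continuous v).
    exists 0. apply Hv. assert (0 < Rmin s t) by (apply Rmin_pos; lra). lra.
  - unfold v in Hmvt. rewrite RInt_point in Hmvt. unfold zero in Hmvt; simpl in Hmvt.
    rewrite Ropp_0, exp_0 in Hmvt.
    pose (G := RInt g s t : R). fold G in Hmvt. fold G.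
    assert (Hinv : exp (- G) * exp G = 1) by (rewrite <- exp_plus, Rplus_opp_l; apply exp_0).
    replace (f t) with (f t * exp (- G) * exp G) by (rewrite Rmult_assoc, Hinv; ring).
    nra.
Qed.

Lemma growth_pos (f g : R -> R) : 0 < f 0 ->
  filterlim f (at_right 0) (locally (f 0)) ->
  (forall t, 0 < t -> is_derive f t (f t * g t)) ->
  (forall t, 0 < t -> continuous g t) ->
  forall t, 0 < t -> 0 < f t.
Proof.
  intros Hf0 Hlim Hf Hg t Ht.
  assert (Hnear : at_right 0 (fun s => 0 < s /\ 0 < f s)).
  { apply filter_and.
    - exists (mkposreal 1 Rlt_0_1). intros s _ Hs. exact Hs.
    - apply Hlim. exists (mkposreal (f 0) Hf0). intros v Hv.
      apply Rabs_lt_between' in Hv. simpl in Hv. lra. }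
  destruct (Hierarchy.filter_ex _ Hnear) as [s [Hs Hfs]].
  rewrite (growth_exp_RInt f g s t Hs Ht Hf Hg).
  apply Rmult_lt_0_compat; [exact Hfs | apply exp_pos].
Qed.

Lemma is_derive_ln_growth (f g : R -> R) (t : R) : 0 < f t ->
  is_derive f t (f t * g t) -> is_derive (fun r => ln (f r)) t (g t).
Proof.
  intros Hpos Hf. replace (g t) with (f t * g t * / f t) by (field; lra).
  apply (is_derive_comp ln f); [apply is_derive_ln, Hpos | exact Hf].
Qed.

Lemma eventually_le_of_growth_le (f g : R -> R) (T L d : R) : 0 < L -> 0 < d ->
  (forall t, T < t -> 0 < f t) ->
  (forall t, T < t -> is_derive f t (f t * g t)) ->
  (forall t, T < t -> L < f t -> g t <= - d) ->
  exists T', forall t, T' <= t -> f t <= L.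
Proof.
  intros HL Hd Hpos Hf Hrate.
  destruct (eventually_le_of_deriv_le (fun t => ln (f t)) g T (ln L) d Hd) as [T' HT'].
  - intros t Ht. apply is_derive_ln_growth; auto.
  - intros t Ht Hln. apply Hrate; [exact Ht |]. apply ln_lt_inv; auto.
  - exists (Rmax T' (T + 1)). intros t Ht.
    assert (T' <= t /\ T < t) as [HT't HTt] by (pose proof (Rmax_l T' (T + 1));
      pose proof (Rmax_r T' (T + 1)); lra).
    apply Rnot_lt_le. intros Hlt. specialize (HT' t HT't).
    pose proof (ln_increasing L (f t) HL Hlt). lra.
Qed.

Lemma eventually_ge_of_growth_ge (f g : R -> R) (T L d : R) : 0 < d ->
  (forall t, T < t -> 0 < f t) ->
  (forall t, T < t -> is_derive f t (f t * g t)) ->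
  (forall t, T < t -> f t < L -> d <= g t) ->
  exists T', forall t, T' <= t -> L <= f t.
Proof.
  intros Hd Hpos Hf Hrate.
  destruct (Rle_or_lt L 0) as [HL | HL].
  { exists (T + 1). intros t Ht. specialize (Hpos t ltac:(lra)). lra. }
  destruct (eventually_ge_of_deriv_ge (fun t => ln (f t)) g T (ln L) d Hd) as [T' HT'].
  - intros t Ht. apply is_derive_ln_growth; auto.
  - intros t Ht Hln. apply Hrate; [exact Ht |]. apply ln_lt_inv; auto.
  - exists (Rmax T' (T + 1)). intros t Ht.
    assert (T' <= t /\ T < t) as [HT't HTt] by (pose proof (Rmax_l T' (T + 1));
      pose proof (Rmax_r T' (T + 1)); lra).
    apply Rnot_lt_le. intros Hlt. specialize (HT' t HT't).
    pose proof (ln_increasing (f t) L (Hpos t HTt) Hlt). lra.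
Qed.

Lemma liminf_ge_le (f : R -> R) (mu mu' : R) : mu' <= mu -> liminf_ge f mu -> liminf_ge f mu'.
Proof.
  intros Hle Hf eps Heps. destruct (Hf eps Heps) as [T HT].
  exists T. intros t Ht. specialize (HT t Ht). lra.
Qed.

Section Permanence.

Variables a b c k m : R.
Hypotheses (Ha : 0 < a) (Hb : 0 < b) (Hc : 0 < c) (Hk : 0 < k) (Hm : 0 < m).
Variables x y : R -> R.
Hypothesis Hsol : is_solution a b c k m x y.
Hypotheses (Hx0 : 0 < x 0) (Hy0 : 0 < y 0).

Definition rate_x (t : R) : R := b * (1 - x t - c * y t).
Definition rate_y (t : R) : R := 1 / (1 + k * x t) - y t - a * x t - m * x t * y t.

Lemma is_derive_x (t : R) : 0 < t -> is_derive x t (x t * rate_x t).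
Proof.
  intros Ht. destruct Hsol as [_ [_ Hd]]. unfold rate_x.
  replace (x t * (b * (1 - x t - c * y t))) with (b * x t * (1 - x t - c * y t)) by ring.
  apply Hd, Ht.
Qed.

Lemma is_derive_y (t : R) : 0 < t -> is_derive y t (y t * rate_y t).
Proof. intros Ht. destruct Hsol as [_ [_ Hd]]. apply Hd, Ht. Qed.

Lemma ex_derive_x (t : R) : 0 < t -> ex_derive x t.
Proof. intros Ht. eexists. apply is_derive_x, Ht. Qed.

Lemma ex_derive_y (t : R) : 0 < t -> ex_derive y t.
Proof. intros Ht. eexists. apply is_derive_y, Ht. Qed.

Lemma x_pos (t : R) : 0 < t -> 0 < x t.
Proof.
  apply (growth_pos x rate_x Hx0 (proj1 Hsol) is_derive_x).
  intros u Hu. unfold rate_x.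
  apply (ex_derive_continuous (K := R_AbsRing) (V := R_NormedModule)).
  auto_derive. repeat split; auto using ex_derive_x, ex_derive_y.
Qed.

Lemma y_pos (t : R) : 0 < t -> 0 < y t.
Proof.
  apply (growth_pos y rate_y Hy0 (proj1 (proj2 Hsol)) is_derive_y).
  intros u Hu. unfold rate_y.
  apply (ex_derive_continuous (K := R_AbsRing) (V := R_NormedModule)).
  auto_derive. pose proof (x_pos u Hu).
  repeat split; auto using ex_derive_x, ex_derive_y. nra.
Qed.

Lemma limsup_x : limsup_le x 1.
Proof.
  intros eps Heps.
  apply (eventually_le_of_growth_le x rate_x 0 (1 + eps) (b * eps)); try lra.
  - nra.
  - exact x_pos.
  - exact is_derive_x.
  - intros t Ht Hx. unfold rate_x.
    assert (0 <= b * c * y t) by (pose proof (y_pos t Ht); apply Rmult_le_pos; nra).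
    nra.
Qed.

Lemma limsup_y : limsup_le y 1.
Proof.
  intros eps Heps.
  apply (eventually_le_of_growth_le y rate_y 0 (1 + eps) eps); try lra.
  - exact y_pos.
  - exact is_derive_y.
  - intros t Ht Hy. unfold rate_y. pose proof (x_pos t Ht). pose proof (y_pos t Ht).
    assert (1 / (1 + k * x t) <= 1) by (apply Rle_div_l; nra).
    assert (0 <= a * x t) by nra.
    assert (0 <= m * x t * y t) by (apply Rmult_le_pos; nra).
    lra.
Qed.

Lemma liminf_y : liminf_ge y ((1 / (1 + k) - a) / (1 + m)).
Proof.
  intros eps Heps.
  set (w := 1 / (1 + k)).
  assert (Hw : w * (1 + k) = 1) by (unfold w; field; lra).
  (* Replacing x by 1 in the rate of y costs at most (k + a + m) e; this e
     makes that half of the margin eps (1 + m). *)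
  set (e := eps * (1 + m) / (2 * (k + a + m))).
  assert (He : 0 < e) by (unfold e; apply Rdiv_lt_0_compat; nra).
  assert (Hke : (k + a + m) * e = eps * (1 + m) / 2) by (unfold e; field; lra).
  destruct (limsup_x e He) as [T HT].
  apply (eventually_ge_of_growth_ge y rate_y (Rmax T 0) _ (eps * (1 + m) / 2)).
  - nra.
  - intros t Ht. apply y_pos. pose proof (Rmax_r T 0). lra.
  - intros t Ht. apply is_derive_y. pose proof (Rmax_r T 0). lra.
  - intros t Ht Hy. unfold rate_y. fold w in Hy.
    assert (HX0 : 0 < x t) by (apply x_pos; pose proof (Rmax_r T 0); lra).
    assert (HY0 : 0 < y t) by (apply y_pos; pose proof (Rmax_r T 0); lra).
    specialize (HT t ltac:(pose proof (Rmax_l T 0); lra)).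
    set (X := x t) in *. set (Y := y t) in *. set (z := 1 / (1 + k * X)).
    assert (Hz : z * (1 + k * X) = 1) by (unfold z; field; nra).
    assert (Hw0 : 0 < w) by (unfold w; apply Rdiv_lt_0_compat; lra).
    assert (Hz0 : 0 < z) by (unfold z; apply Rdiv_lt_0_compat; nra).
    assert (Hw1 : w <= 1) by nra.
    assert (Hz1 : z <= 1) by (assert (0 <= z * (k * X)) by (apply Rmult_le_pos; nra); nra).
    assert (Hwz : 0 < w * z <= 1) by (split; [apply Rmult_lt_0_compat | nra]; lra).
    assert (Hzw : z - w = w * z * (k * (1 - X))) by nra.
    assert (Hzlow : w - k * e <= z).
    { assert (- (k * e) <= k * (1 - X)) by nra.
      assert (w * z * - (k * e) <= w * z * (k * (1 - X))) by (apply Rmult_le_compat_l; lra).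
      assert (0 < k * e) by nra.
      nra. }
    assert (HY : Y * (1 + m) < w - a - eps * (1 + m)).
    { apply (Rmult_lt_compat_r (1 + m)) in Hy; [| lra].
      replace ((w - a) / (1 + m) - eps) with ((w - a - eps * (1 + m)) / (1 + m)) in Hy
        by (field; lra).
      unfold Rdiv in Hy. rewrite Rmult_assoc, Rinv_l, Rmult_1_r in Hy by lra. exact Hy. }
    assert (HmXY : m * X * Y <= m * Y + m * e).
    { assert (0 < m * Y) by (apply Rmult_lt_0_compat; lra).
      assert (0 < eps * (1 + m)) by nra.
      assert (HY1 : Y <= 1) by lra.
      assert (m * Y * (X - 1) <= m * Y * e) by (apply Rmult_le_compat_l; lra).
      assert (m * e * Y <= m * e * 1) by (apply Rmult_le_compat_l; nra).
      lra. }
    assert (HaX : a * X <= a + a * e) by nra.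
    lra.
Qed.

Hypothesis Hc1 : c < 1.

Lemma liminf_x : liminf_ge x (1 - c).
Proof.
  intros eps Heps. destruct (limsup_y eps Heps) as [T HT].
  apply (eventually_ge_of_growth_ge x rate_x (Rmax T 0) (1 - c - eps) (b * eps * (1 - c))).
  - apply Rmult_lt_0_compat; nra.
  - intros t Ht. apply x_pos. pose proof (Rmax_r T 0). lra.
  - intros t Ht. apply is_derive_x. pose proof (Rmax_r T 0). lra.
  - intros t Ht Hx. unfold rate_x.
    specialize (HT t ltac:(pose proof (Rmax_l T 0); lra)).
    assert (c * y t <= c * (1 + eps)) by (apply Rmult_le_compat_l; lra).
    rewrite Rmult_assoc. apply Rmult_le_compat_l; lra.
Qed.

End Permanence.

Lemma lt_inv_1_plus (a k : R) : 0 < a -> 0 < 1 + k -> k < 1 / a - 1 -> a < 1 / (1 + k).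
Proof.
  intros Ha Hk Hka.
  assert (Hak : a * (1 + k) < 1) by (assert (a * (1 / a) = 1) by (field; lra); nra).
  apply (Rmult_lt_reg_r (1 + k)); [exact Hk |].
  replace (1 / (1 + k) * (1 + k)) with 1 by (field; lra). exact Hak.
Qed.

Theorem theorem3 (a b c k m : R) :
  0 < a -> 0 < b -> 0 < c -> 0 < k -> 0 < m ->
  k < 1 / a - 1 -> c < 1 ->
  exists mu M : R, 0 < mu /\ mu <= M /\
    forall x y : R -> R,
      is_solution a b c k m x y -> 0 < x 0 -> 0 < y 0 ->
      liminf_ge x mu /\ limsup_le x M /\ liminf_ge y mu /\ limsup_le y M.
Proof.
  intros Ha Hb Hc Hk Hm Hka Hc1.
  set (mu_y := (1 / (1 + k) - a) / (1 + m)).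
  assert (Hmu_y : 0 < mu_y).
  { pose proof (lt_inv_1_plus a k Ha ltac:(lra) Hka).
    unfold mu_y. apply Rdiv_lt_0_compat; lra. }
  exists (Rmin (1 - c) mu_y), 1.
  split; [apply Rmin_pos; lra |].
  split; [pose proof (Rmin_l (1 - c) mu_y); lra |].
  intros x y Hsol Hx0 Hy0.
  split; [| split; [| split]].
  - apply (liminf_ge_le x (1 - c)); [apply Rmin_l |].
    exact (liminf_x a b c k m Ha Hb Hc Hk Hm x y Hsol Hx0 Hy0 Hc1).
  - exact (limsup_x a b c k m Hb Hc Hk x y Hsol Hx0 Hy0).
  - apply (liminf_ge_le y mu_y); [apply Rmin_r |].
    exact (liminf_y a b c k m Ha Hb Hc Hk Hm x y Hsol Hx0 Hy0).
  - exact (limsup_y a b c k m Ha Hk Hm x y Hsol Hx0 Hy0).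
Qed.
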